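(* Let $\mathscr S=([0,\infty)\rtimes\mathbb{N}^{\times},\mathcal O)$ be the scaling site defined below. The canonical projection from the set $\mathscr S(\mathbb{R}_{\max})$ of points of $\mathscr S$ defined over $\mathbb{R}_+^{\max}$ to the set of (isomorphism classes of) points of the topos $[0,\infty)\rtimes\mathbb{N}^{\times}$ is bijective.
   Context: $\mathbb{N}^{\times}$ is the multiplicative monoid of positive integers; $[0,\infty)\rtimes\mathbb{N}^{\times}$ is the topos of $\mathbb{N}^{\times}$-equivariant sheaves of sets on $[0,\infty)$. $\mathbb{R}_{\max}=\mathbb{R}\cup\{-\infty\}$ with addition $\max$ and multiplication $+$, isomorphic via $\exp$ to $\mathbb{R}_+^{\max}$. The structure sheaf $\mathcal O$ assigns to an open $U\subset[0,\infty)$ the semiring (operations max and $+$) of continuous convex functions $f:U\to\mathbb{R}_{\max}$ such that every $\lambda\in U$ has an open interval neighborhood $V$ on which $f$ is affine with integer slope on each component of $V\setminus\{\lambda\}$; $n\in\mathbb{N}^{\times}$ acts by $f\mapsto f(n\,\cdot)$. A point of $\mathscr S$ over $\mathbb{R}_+^{\max}$ is a pair consisting of a point $\mathfrak p$ of the topos and an $\mathbb{R}_{\max}$-linear semiring morphism from the stalk $\mathcal O_{\mathfrak p}$ to $\mathbb{R}_{\max}$; the projection forgets the morphism. *)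

From Stdlib Require Import Reals Lra.
Open Scope R_scope.

(** * The tropical semifield R_max = R ∪ {-oo}; None encodes -oo. *)
Definition Rmx := option R.

Definition mx (a b : Rmx) : Rmx :=
  match a, b with
  | None, _ => b
  | _, None => a
  | Some x, Some y => Some (Rbasic_fun.Rmax x y)
  end.

Definition pl (a b : Rmx) : Rmx :=
  match a, b with
  | Some x, Some y => Some (x + y)
  | _, _ => None
  end.

Definition rmax_le (a b : Rmx) : Prop :=
  match a, b with
  | None, _ => True
  | Some _, None => False
  | Some x, Some y => x <= y
  end.

Definition rmax_comb (t : R) (a b : Rmx) : Rmx :=
  match a, b with
  | Some x, Some y => Some (t * x + (1 - t) * y)
  | _, _ => None
  end.

(** exp : R_max -> R_+^max, exp(-oo) = 0 (used for the topology of R_max) *)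
Definition rmax_exp (a : Rmx) : R :=
  match a with None => 0 | Some x => exp x end.

Definition is_open_pos (U : R -> Prop) : Prop :=
  (forall x, U x -> 0 <= x) /\
  (forall x, U x -> exists eps, 0 < eps /\
       forall y, 0 <= y -> Rabs (y - x) < eps -> U y).

Record Open := mkOpen { ocar :> R -> Prop ; oopen : is_open_pos ocar }.

(** * The structure sheaf O.  A section over U is represented by a function
    R -> Rmx, only its values on U being relevant. *)

(** f is affine with integer slope on the set I (in the R_max sense:
    f x = b + n x, with b in R_max, so the constant -oo is allowed). *)
Definition affine_int_on (I : R -> Prop) (f : R -> Rmx) : Prop :=
  exists (n : Z) (b : Rmx), forall x, I x -> f x = pl b (Some (IZR n * x)).

Definition continuous_on (U : R -> Prop) (f : R -> Rmx) : Prop :=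
  forall x, U x -> forall eps, 0 < eps -> exists delta, 0 < delta /\
    forall y, U y -> Rabs (y - x) < delta ->
      Rabs (rmax_exp (f y) - rmax_exp (f x)) < eps.

Definition convex_on (U : R -> Prop) (f : R -> Rmx) : Prop :=
  forall x y t, 0 < t < 1 ->
    (forall z, Rmin x y <= z <= Rbasic_fun.Rmax x y -> U z) ->
    rmax_le (f (t * x + (1 - t) * y)) (rmax_comb t (f x) (f y)).

Definition locally_piecewise_int (U : R -> Prop) (f : R -> Rmx) : Prop :=
  forall lam, U lam -> exists a b, a < lam < b /\
    (forall y, 0 <= y -> a < y < b -> U y) /\
    affine_int_on (fun y => 0 <= y /\ a < y < lam) f /\
    affine_int_on (fun y => lam < y < b) f.

Definition O_sec (U : R -> Prop) (f : R -> Rmx) : Prop :=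
  continuous_on U f /\ convex_on U f /\ locally_piecewise_int U f.

(** * The site of [0,oo) ⋊ N^x : objects are opens, a morphism V -> U is an
    n in N^x with n V ⊆ U; composition is multiplication.  A presheaf such as
    O maps f in O(U) to f(n .) in O(V).  Covers are ordinary open covers
    (by inclusions, n = 1). *)
Definition hom (V U : Open) (n : nat) : Prop :=
  (1 <= n)%nat /\ forall x, V x -> U (INR n * x).

(** * Points of the topos: flat (filtering), cover-preserving covariant
    functors from the site to sets. *)
Record point := {
  pt : Open -> Type ;
  pmap : forall (V U : Open) (n : nat), hom V U n -> pt V -> pt U ;
  pmap_id : forall U (h : hom U U 1) a, pmap U U 1 h a = a ;
  pmap_comp : forall V U W n m (h1 : hom V U n) (h2 : hom U W m)
      (h3 : hom V W (m * n)) a,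
      pmap U W m h2 (pmap V U n h1 a) = pmap V W (m * n) h3 a ;
  flat_ne : exists (U : Open) (a : pt U), True ;
  flat_pair : forall (U V : Open) (a : pt U) (b : pt V),
      exists (W : Open) (c : pt W) n m (h1 : hom W U n) (h2 : hom W V m),
        pmap W U n h1 c = a /\ pmap W V m h2 c = b ;
  flat_eq : forall (U V : Open) n m (h1 : hom U V n) (h2 : hom U V m) (a : pt U),
      pmap U V n h1 a = pmap U V m h2 a ->
      exists (W : Open) k (hk : hom W U k) (c : pt W),
        pmap W U k hk c = a /\ (n * k = m * k)%nat ;
  cont : forall (U : Open) (I : Type) (Ui : I -> Open),
      (forall i x, Ui i x -> U x) -> (forall x, U x -> exists i, Ui i x) ->
      forall a : pt U, exists i (b : pt (Ui i)) (h : hom (Ui i) U 1),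
        pmap (Ui i) U 1 h b = a
}.

Definition pt_iso (p q : point) : Prop :=
  exists (al : forall U, pt p U -> pt q U) (be : forall U, pt q U -> pt p U),
    (forall U a, be U (al U a) = a) /\ (forall U b, al U (be U b) = b) /\
    (forall V U n (h : hom V U n) a, al U (pmap p V U n h a) = pmap q V U n h (al V a)).

(** * R_max-linear semiring morphisms from the stalk O_p to R_max.
    The stalk is the colimit  O_p = colim_{(U, a in p(U))} O(U), i.e. triples
    (U, f, a) with f in O(U), a in p(U), modulo (V, f(n .), c) ~ (U, f, p(n) c)
    for n : V -> U; by filteredness any two elements are represented over a
    common (U,a), where the operations are pointwise.  A map out of O_p is
    thus a function on such triples respecting these identifications. *)
Record stalk_hom (p : point) := {
  rho : forall U : Open, (R -> Rmx) -> pt p U -> Rmx ;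
  rho_ext : forall (U : Open) f g a, O_sec U f -> O_sec U g ->
      (forall x, U x -> f x = g x) -> rho U f a = rho U g a ;
  rho_res : forall V U n (h : hom V U n) f a, O_sec U f ->
      rho V (fun x => f (INR n * x)) a = rho U f (pmap p V U n h a) ;
  rho_max : forall (U : Open) f g a, O_sec U f -> O_sec U g ->
      rho U (fun x => mx (f x) (g x)) a = mx (rho U f a) (rho U g a) ;
  rho_plus : forall (U : Open) f g a, O_sec U f -> O_sec U g ->
      rho U (fun x => pl (f x) (g x)) a = pl (rho U f a) (rho U g a) ;
  rho_zero : forall (U : Open) a, rho U (fun _ => None) a = None ;
  rho_one : forall (U : Open) a, rho U (fun _ => Some 0) a = Some 0 ;
  rho_lin : forall (c : Rmx) (U : Open) f a, O_sec U f ->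
      rho U (fun x => pl c (f x)) a = pl c (rho U f a)
}.

Definition site_pt_iso (p : point) (r : stalk_hom p) (q : point) (s : stalk_hom q)
  : Prop :=
  exists (al : forall U, pt p U -> pt q U) (be : forall U, pt q U -> pt p U),
    (forall U a, be U (al U a) = a) /\ (forall U b, al U (be U b) = b) /\
    (forall V U n (h : hom V U n) a, al U (pmap p V U n h a) = pmap q V U n h (al V a)) /\
    (forall (U : Open) f a, O_sec U f -> rho q s U f (al U a) = rho p r U f a).

(* For a point [p] and [a] in [p(U)], the opens [W] of [U] through which [a]
   factors form a filter (by flatness of [p]) that converges (by continuity of
   [p]) to a unique [lambda(U,a)] in [U], with [lambda(U, p(n) a) = n lambda(V,a)].
   Any R_max-linear morphism [rho] of the stalk is evaluation at [lambda]: it only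
   depends on germs at [lambda], it is monotone, which forces its value on an
   affine function by squeezing, and near [lambda] every section of [O] is the max
   of two affine functions.  Hence [rho] is unique, and evaluation at [lambda] is
   such a morphism. *)

From Stdlib Require Import Reals Lra Lia Classical FunctionalExtensionality ClassicalEpsilon.
Open Scope R_scope.

Definition aff (k : Z) (b : Rmx) : R -> Rmx := fun x => pl b (Some (IZR k * x)).

Lemma rmax_exp_inj (a b : Rmx) : rmax_exp a = rmax_exp b -> a = b.
Proof.
  destruct a as [x|], b as [y|]; simpl; intros H; auto.
  - f_equal; apply exp_inv; auto.
  - pose proof (exp_pos x); lra.
  - pose proof (exp_pos y); lra.
Qed.

Lemma mx_idem (a : Rmx) : mx a a = a.
Proof. destruct a; simpl; auto. f_equal. apply Rmax_left; lra. Qed.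

Lemma mx_Some_le (r : Rmx) c : r = mx r (Some c) -> rmax_le (Some c) r.
Proof.
  destruct r as [w|]; simpl; intros H; [|discriminate].
  injection H as H. rewrite H. apply Rmax_r.
Qed.

Lemma aff_mx_left k1 b1 k2 b2 lam y :
  aff k1 b1 lam = aff k2 b2 lam -> aff k1 b1 lam = None \/ IZR k1 <= IZR k2 ->
  y <= lam -> mx (aff k1 b1 y) (aff k2 b2 y) = aff k1 b1 y.
Proof.
  unfold aff; intros E Hk Hy.
  destruct b1 as [c1|], b2 as [c2|]; simpl in *; try discriminate; [|reflexivity].
  injection E as E. destruct Hk as [Hk|Hk]; [discriminate|].
  f_equal. apply Rmax_left. nra.
Qed.

Lemma aff_mx_right k1 b1 k2 b2 lam y :
  aff k1 b1 lam = aff k2 b2 lam -> aff k1 b1 lam = None \/ IZR k1 <= IZR k2 ->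
  lam <= y -> mx (aff k1 b1 y) (aff k2 b2 y) = aff k2 b2 y.
Proof.
  unfold aff; intros E Hk Hy.
  destruct b1 as [c1|], b2 as [c2|]; simpl in *; try discriminate; [|reflexivity].
  injection E as E. destruct Hk as [Hk|Hk]; [discriminate|].
  f_equal. apply Rmax_right. nra.
Qed.

Lemma aff_continuous (k : Z) (b : Rmx) (lam eps : R) : 0 < eps ->
  exists delta, 0 < delta /\ forall y, Rabs (y - lam) < delta ->
    Rabs (rmax_exp (aff k b y) - rmax_exp (aff k b lam)) < eps.
Proof.
  intros He. destruct b as [c|].
  - assert (Hc : continuity_pt (fun y => exp (c + IZR k * y)) lam) by reg.
    destruct (Hc eps He) as [d [Hd Hy]]. exists d; split; auto.
    intros y Hyl. unfold aff; simpl.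
    destruct (Req_dec y lam) as [->|Hne].
    + rewrite Rminus_diag, Rabs_R0; auto.
    + apply (Hy y). split; [split; [exact I | auto] | exact Hyl].
  - exists 1; split; [lra|]. intros. simpl. rewrite Rminus_diag, Rabs_R0; auto.
Qed.

(* Continuity is measured through [exp : R_max -> R_+^max], so it forces the
   value at [lam] even when the approximating values are [-oo]. *)
Lemma continuous_on_eq_aff (U : R -> Prop) f k b lam :
  continuous_on U f -> U lam ->
  (forall d, 0 < d -> exists y, U y /\ Rabs (y - lam) < d /\ f y = aff k b y) ->
  f lam = aff k b lam.
Proof.
  intros Hc Ul Hy. apply rmax_exp_inj, NNPP; intro Hne.
  set (e := Rabs (rmax_exp (f lam) - rmax_exp (aff k b lam)) / 2).
  assert (He : 0 < e).
  { unfold e. enough (0 < Rabs (rmax_exp (f lam) - rmax_exp (aff k b lam))) by lra.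
    apply Rabs_pos_lt. intro; apply Hne; lra. }
  destruct (Hc lam Ul e He) as [d1 [Hd1 H1]].
  destruct (aff_continuous k b lam e He) as [d2 [Hd2 H2]].
  destruct (Hy (Rmin d1 d2)) as [y [Uy [Hyl Efy]]]; [apply Rmin_glb_lt; auto|].
  pose proof (Rmin_l d1 d2). pose proof (Rmin_r d1 d2).
  specialize (H1 y Uy ltac:(lra)). specialize (H2 y ltac:(lra)).
  rewrite Efy in H1. unfold e in *.
  revert H1 H2. generalize (rmax_exp (aff k b y)) (rmax_exp (f lam)) (rmax_exp (aff k b lam)).
  intros u v w H1 H2. split_Rabs; lra.
Qed.

Lemma comb_between x y t : 0 < t < 1 -> Rmin x y <= t * x + (1 - t) * y <= Rmax x y.
Proof.
  intros Ht. destruct (Rle_dec x y).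
  - rewrite Rmin_left, Rmax_right by lra. split; nra.
  - rewrite Rmin_right, Rmax_left by lra. split; nra.
Qed.

Lemma O_sec_ext (U : Open) f g : (forall x, U x -> f x = g x) -> O_sec U f -> O_sec U g.
Proof.
  intros E [Hc [Hv Hl]]. split; [|split].
  - intros x Ux eps He. destruct (Hc x Ux eps He) as [d [Hd Hy]].
    exists d; split; auto. intros y Uy Hyx. rewrite <- !E by auto. auto.
  - intros x y t Ht Hz.
    assert (U x) by (apply Hz; split; [apply Rmin_l | apply Rmax_l]).
    assert (U y) by (apply Hz; split; [apply Rmin_r | apply Rmax_r]).
    assert (U (t * x + (1 - t) * y)) by (apply Hz, comb_between; auto).
    rewrite <- !E by auto. apply Hv; auto.
  - intros lam Ul. destruct (Hl lam Ul) as [a [b [Hab [HU [[n1 [b1 H1]] [n2 [b2 H2]]]]]]].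
    assert (0 <= lam) by (apply (proj1 (oopen U)); auto).
    exists a, b; split; auto; split; auto; split.
    + exists n1, b1. intros x Hx. rewrite <- E by (apply HU; lra). auto.
    + exists n2, b2. intros x Hx. rewrite <- E by (apply HU; lra). auto.
Qed.

Lemma O_sec_restrict (W U : Open) f : (forall x, W x -> U x) -> O_sec U f -> O_sec W f.
Proof.
  intros S [Hc [Hv Hl]]. split; [|split].
  - intros x Wx eps He. destruct (Hc x (S x Wx) eps He) as [d [Hd Hy]].
    exists d; split; auto.
  - intros x y t Ht Hz. apply Hv; auto.
  - intros lam Wl.
    destruct (Hl lam (S lam Wl)) as [a [b [Hab [HU [[n1 [b1 H1]] [n2 [b2 H2]]]]]]].
    destruct (proj2 (oopen W) lam Wl) as [e [He HW]].
    exists (Rmax a (lam - e)), (Rmin b (lam + e)).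
    pose proof (Rmax_l a (lam - e)). pose proof (Rmax_r a (lam - e)).
    pose proof (Rmin_l b (lam + e)). pose proof (Rmin_r b (lam + e)).
    assert (Rmax a (lam - e) < lam) by (apply Rmax_lub_lt; lra).
    assert (lam < Rmin b (lam + e)) by (apply Rmin_glb_lt; lra).
    split; [lra|]; split; [|split].
    + intros y Hy0 Hy. apply HW; auto. split_Rabs; lra.
    + exists n1, b1. intros x Hx. apply H1. lra.
    + exists n2, b2. intros x Hx. apply H2. lra.
Qed.

Lemma O_sec_aff (U : Open) k b : O_sec U (aff k b).
Proof.
  split; [|split].
  - intros x Ux eps He. destruct (aff_continuous k b x eps He) as [d [Hd H]].
    exists d; split; auto.
  - intros x y t Ht Hz. unfold aff. destruct b as [c|]; simpl; auto. right; ring.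
  - intros lam Ul. destruct (proj2 (oopen U) lam Ul) as [e [He HW]].
    exists (lam - e), (lam + e). split; [lra|]. split.
    + intros y Hy0 Hy. apply HW; auto. split_Rabs; lra.
    + split; exists k, b; reflexivity.
Qed.

Lemma O_sec_const (U : Open) c : O_sec U (fun _ => Some c).
Proof.
  apply (O_sec_ext U (aff 0 (Some c))); [|apply O_sec_aff].
  intros x _. unfold aff; simpl. f_equal; ring.
Qed.

Lemma O_sec_right_piece (U : Open) f lam : O_sec U f -> U lam ->
  exists b0 k b, lam < b0 /\ forall y, lam <= y < b0 -> U y /\ f y = aff k b y.
Proof.
  intros [Hc [_ Hl]] Ul. destruct (Hl lam Ul) as [a0 [b0 [Hab [HU [_ [k [b H]]]]]]].
  assert (0 <= lam) by (apply (proj1 (oopen U)); auto).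
  exists b0, k, b. split; [lra|]. intros y Hy. split; [apply HU; lra|].
  destruct (Req_dec y lam) as [->|Hne]; [|apply H; lra].
  apply (continuous_on_eq_aff U); auto. intros d Hd.
  pose proof (Rmin_l d (b0 - lam)). pose proof (Rmin_r d (b0 - lam)).
  assert (0 < Rmin d (b0 - lam)) by (apply Rmin_glb_lt; lra).
  exists (lam + Rmin d (b0 - lam) / 2).
  split; [apply HU; lra|]. split; [split_Rabs; lra|]. apply H. lra.
Qed.

Lemma O_sec_left_piece (U : Open) f lam : O_sec U f -> U lam -> 0 < lam ->
  exists a0 k b, a0 < lam /\ forall y, a0 < y <= lam -> U y /\ f y = aff k b y.
Proof.
  intros [Hc [_ Hl]] Ul Hlam. destruct (Hl lam Ul) as [a0 [b0 [Hab [HU [[k [b H]] _]]]]].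
  pose proof (Rmax_l a0 0). pose proof (Rmax_r a0 0). set (a1 := Rmax a0 0) in *.
  assert (a1 < lam) by (apply Rmax_lub_lt; lra).
  exists a1, k, b. split; auto. intros y Hy. split; [apply HU; lra|].
  destruct (Req_dec y lam) as [->|Hne]; [|apply H; lra].
  apply (continuous_on_eq_aff U); auto. intros d Hd.
  pose proof (Rmin_l d (lam - a1)). pose proof (Rmin_r d (lam - a1)).
  assert (0 < Rmin d (lam - a1)) by (apply Rmin_glb_lt; lra).
  exists (lam - Rmin d (lam - a1) / 2).
  split; [apply HU; lra|]. split; [split_Rabs; lra|]. apply H. lra.
Qed.

Lemma convex_slope_le (U : Open) f lam a0 b0 k1 b1 k2 b2 : convex_on U f ->
  a0 < lam < b0 ->
  (forall y, a0 < y <= lam -> U y /\ f y = aff k1 b1 y) ->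
  (forall y, lam <= y < b0 -> U y /\ f y = aff k2 b2 y) ->
  f lam = None \/ IZR k1 <= IZR k2.
Proof.
  intros Hv Hab HL HR.
  assert (EL : f lam = aff k1 b1 lam) by (apply HL; lra).
  assert (ER : f lam = aff k2 b2 lam) by (apply HR; lra).
  destruct b1 as [c1|]; [destruct b2 as [c2|]|]; [right | left; auto | left; auto].
  set (d := Rmin (lam - a0) (b0 - lam) / 2).
  pose proof (Rmin_l (lam - a0) (b0 - lam)). pose proof (Rmin_r (lam - a0) (b0 - lam)).
  assert (0 < d) by (apply Rlt_gt, Rdiv_lt_0_compat; [apply Rmin_glb_lt|]; lra).
  assert (Hseg : forall z, Rmin (lam - d) (lam + d) <= z <= Rmax (lam - d) (lam + d) -> U z).
  { rewrite Rmin_left, Rmax_right by lra.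
    intros z Hz. destruct (Rle_dec z lam); [apply HL | apply HR]; unfold d in *; lra. }
  pose proof (Hv (lam - d) (lam + d) (1/2) ltac:(lra) Hseg) as Hcv.
  replace (1 / 2 * (lam - d) + (1 - 1 / 2) * (lam + d)) with lam in Hcv by field.
  rewrite (proj2 (HL (lam - d) ltac:(unfold d in *; lra))),
    (proj2 (HR (lam + d) ltac:(unfold d in *; lra))), EL in Hcv.
  rewrite EL in ER. unfold aff in *; simpl in *. injection ER as ER.
  apply Rnot_lt_le; intro. nra.
Qed.

Lemma O_sec_germ (U : Open) f lam : O_sec U f -> U lam ->
  exists d k1 b1 k2 b2, 0 < d /\
    forall y, U y -> Rabs (y - lam) < d -> f y = mx (aff k1 b1 y) (aff k2 b2 y).
Proof.
  intros Hf Ul. assert (0 <= lam) by (apply (proj1 (oopen U)); auto).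
  destruct (O_sec_right_piece U f lam Hf Ul) as [b0 [k2 [b2 [Hb0 HR]]]].
  destruct (Req_dec lam 0) as [E0|Hlam].
  - exists (b0 - lam), k2, b2, k2, b2. split; [lra|]. intros y Uy Hy.
    assert (0 <= y) by (apply (proj1 (oopen U)); auto).
    rewrite mx_idem. apply HR. split_Rabs; lra.
  - destruct (O_sec_left_piece U f lam Hf Ul ltac:(lra)) as [a0 [k1 [b1 [Ha0 HL]]]].
    pose proof (convex_slope_le U f lam a0 b0 k1 b1 k2 b2 (proj1 (proj2 Hf))
      ltac:(lra) HL HR) as Hk.
    assert (EL : f lam = aff k1 b1 lam) by (apply HL; lra).
    assert (ER : f lam = aff k2 b2 lam) by (apply HR; lra).
    rewrite EL in Hk, ER.
    exists (Rmin (lam - a0) (b0 - lam)), k1, b1, k2, b2.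
    pose proof (Rmin_l (lam - a0) (b0 - lam)). pose proof (Rmin_r (lam - a0) (b0 - lam)).
    split; [apply Rmin_glb_lt; lra|]. intros y Uy Hy.
    destruct (Rle_dec y lam).
    + rewrite (aff_mx_left _ _ _ _ lam) by auto. apply HL. split_Rabs; lra.
    + rewrite (aff_mx_right _ _ _ _ lam) by (auto; lra). apply HR. split_Rabs; lra.
Qed.

Definition rel_open (Q : R -> Prop) : Prop :=
  forall x, Q x -> exists eps, 0 < eps /\ forall y, 0 <= y -> Rabs (y - x) < eps -> Q y.

Lemma inter_is_open (U : Open) Q : rel_open Q -> is_open_pos (fun y => U y /\ Q y).
Proof.
  intros HQ. split.
  - intros x [Ux _]. apply (proj1 (oopen U)); auto.
  - intros x [Ux Qx]. destruct (proj2 (oopen U) x Ux) as [e1 [He1 H1]].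
    destruct (HQ x Qx) as [e2 [He2 H2]].
    exists (Rmin e1 e2). split; [apply Rmin_glb_lt; auto|].
    intros y Hy Hyx. pose proof (Rmin_l e1 e2). pose proof (Rmin_r e1 e2).
    split; [apply H1 | apply H2]; auto; lra.
Qed.

Definition inter (U : Open) Q (HQ : rel_open Q) : Open := mkOpen _ (inter_is_open U Q HQ).

Lemma rel_open_lt c : rel_open (fun y => y < c).
Proof. intros x Hx. exists (c - x). split; [lra|]. intros y _ H. split_Rabs; lra. Qed.

Lemma rel_open_ball c e : rel_open (fun y => Rabs (y - c) < e).
Proof.
  intros x Hx. exists (e - Rabs (x - c)). split; [lra|]. intros y _ H. split_Rabs; lra.
Qed.

Lemma rel_open_far c e : rel_open (fun y => e < Rabs (y - c)).
Proof.
  intros x Hx. exists (Rabs (x - c) - e). split; [lra|]. intros y _ H. split_Rabs; lra.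
Qed.

Definition Lt (U : Open) c : Open := inter U _ (rel_open_lt c).
Definition Ball (U : Open) c e : Open := inter U _ (rel_open_ball c e).
Definition oint (W1 W2 : Open) : Open := inter W1 W2 (proj2 (oopen W2)).

Lemma hom_incl (W U : Open) : (forall x, W x -> U x) -> hom W U 1.
Proof. intros H. split; auto. intros x Wx. simpl. rewrite Rmult_1_l. auto. Qed.

Lemma hom1_sub (W U : Open) : hom W U 1 -> forall x, W x -> U x.
Proof. intros [_ H] x Wx. specialize (H x Wx). simpl in H. rewrite Rmult_1_l in H. auto. Qed.

Lemma pred_threshold (S : R -> Prop) : (forall x y, x <= y -> S x -> S y) ->
  (exists x, S x) -> (exists x, ~ S x) ->
  exists l, (forall e, 0 < e -> S (l + e)) /\ (forall x, x < l -> ~ S x).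
Proof.
  intros Smono [x0 Hx0] HnS.
  assert (Hb : bound (fun x => ~ S x)).
  { exists x0. intros t Ht. apply Rnot_lt_le; intro. apply Ht, (Smono x0); auto; lra. }
  destruct (completeness _ Hb HnS) as [l [Hub Hlub]].
  exists l. split.
  - intros e He. apply NNPP; intro H. specialize (Hub _ H). lra.
  - intros x Hx HS. enough (l <= x) by lra. apply Hlub. intros t Ht.
    apply Rnot_lt_le; intro. apply Ht, (Smono x); auto; lra.
Qed.

Section Point.
Variable p : point.

Lemma pmap_comp_eq V U W n m k (h1 : hom V U n) (h2 : hom U W m) (h3 : hom V W k) a :
  k = (m * n)%nat -> pmap p U W m h2 (pmap p V U n h1 a) = pmap p V W k h3 a.
Proof. intros ->. apply pmap_comp. Qed.

Definition pt_filter (U : Open) (a : pt p U) (W : Open) : Prop :=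
  exists (a' : pt p W) (h : hom W U 1), pmap p W U 1 h a' = a.

Lemma pt_filter_self (U : Open) (a : pt p U) : pt_filter U a U.
Proof. exists a, (hom_incl U U (fun x h => h)). apply pmap_id. Qed.

Lemma pt_filter_sub (U : Open) (a : pt p U) W : pt_filter U a W -> forall x, W x -> U x.
Proof. intros [a' [h _]]. apply hom1_sub; auto. Qed.

Lemma pt_filter_mono (U : Open) (a : pt p U) (W1 W2 : Open) :
  (forall x, W1 x -> W2 x) -> (forall x, W2 x -> U x) ->
  pt_filter U a W1 -> pt_filter U a W2.
Proof.
  intros S12 S2 [a' [h E]].
  exists (pmap p W1 W2 1 (hom_incl _ _ S12) a'), (hom_incl _ _ S2).
  rewrite (pmap_comp_eq _ _ _ _ _ 1 _ _ h); auto.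
Qed.

Lemma pt_filter_cover (U : Open) (a : pt p U) W (I : Type) (Ui : I -> Open) :
  pt_filter U a W -> (forall i x, Ui i x -> W x) -> (forall x, W x -> exists i, Ui i x) ->
  exists i, pt_filter U a (Ui i).
Proof.
  intros HF S C. pose proof (pt_filter_sub _ _ _ HF) as SW. destruct HF as [a' [h E]].
  destruct (cont p W I Ui S C a') as [i [b [h' E']]].
  exists i, b, (hom_incl _ _ (fun x Hx => SW x (S i x Hx))).
  rewrite <- E, <- E'. symmetry. apply pmap_comp_eq; auto.
Qed.

(* The empty family covers the empty open set. *)
Lemma pt_filter_nonempty (U : Open) (a : pt p U) W : pt_filter U a W -> exists x, W x.
Proof.
  intros [a' _]. apply NNPP; intro HW.
  destruct (cont p W Empty_set (fun i => match i with end) (fun i => match i with end)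
    (fun x Wx => False_ind _ (HW (ex_intro _ x Wx))) a') as [[] _].
Qed.

(* Flatness makes the two maps [W -> U] through [W1] and [W2] agree, so both have scale 1. *)
Lemma pt_filter_inter (U : Open) (a : pt p U) W1 W2 :
  pt_filter U a W1 -> pt_filter U a W2 -> pt_filter U a (oint W1 W2).
Proof.
  intros H1 H2. pose proof (pt_filter_sub _ _ _ H1) as S1.
  destruct H1 as [a1 [h1 E1]], H2 as [a2 [h2 E2]].
  destruct (flat_pair p W1 W2 a1 a2) as [W [c [n [m [g1 [g2 [F1 F2]]]]]]].
  assert (hn : hom W U n).
  { destruct g1 as [Hn G1]. split; [exact Hn|]. intros x Wx. apply S1, G1, Wx. }
  assert (hm : hom W U m).
  { destruct g2 as [Hm G2]. split; [exact Hm|]. intros x Wx. apply (hom1_sub _ _ h2), G2, Wx. }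
  assert (Ea : pmap p W U n hn c = pmap p W U m hm c).
  { rewrite <- (pmap_comp_eq W W1 U n 1 n g1 h1) by lia.
    rewrite <- (pmap_comp_eq W W2 U m 1 m g2 h2) by lia.
    rewrite F1, F2, E1, E2. auto. }
  destruct (flat_eq p W U n m hn hm c Ea) as [W' [k [hk [c' [_ Enm]]]]].
  assert (n = m) by (destruct hk as [Hk _]; apply (Nat.mul_cancel_r n m k); lia).
  subst m.
  assert (g : hom W (oint W1 W2) n).
  { split; [apply g1|]. intros x Wx. split; [apply g1 | apply g2]; auto. }
  exists (pmap p W (oint W1 W2) n g c).
  exists (hom_incl (oint W1 W2) U (fun x (Hx : oint W1 W2 x) => S1 x (proj1 Hx))).
  rewrite (pmap_comp_eq _ _ _ _ _ n _ _ hn) by lia. rewrite <- E1, <- F1.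
  symmetry. apply pmap_comp_eq. lia.
Qed.

Definition is_lambda (U : Open) (a : pt p U) (l : R) : Prop :=
  U l /\ forall e, 0 < e -> pt_filter U a (Ball U l e).

(* Otherwise the sets [{y in U | |y - l| > 1/(n+1)}] cover [U], and each of them
   misses a ball of the filter around [l]. *)
Lemma pt_filter_limit_mem (U : Open) (a : pt p U) l :
  (forall e, 0 < e -> pt_filter U a (Ball U l e)) -> U l.
Proof.
  intros HB. apply NNPP; intro HnU.
  set (far n := inter U _ (rel_open_far l (/ INR (S n)))).
  destruct (pt_filter_cover U a U nat far (pt_filter_self U a)) as [n Hn].
  - intros n x [Ux _]; auto.
  - intros x Ux. assert (x <> l) by (intros ->; auto).
    destruct (archimed_cor1 (Rabs (x - l))) as [[|n] [HN HN0]];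
      [apply Rabs_pos_lt; lra | lia |].
    exists n. split; auto.
  - assert (0 < / INR (S n)) by (apply Rinv_0_lt_compat, lt_0_INR; lia).
    destruct (pt_filter_nonempty _ _ _ (pt_filter_inter U a _ _ Hn (HB _ H)))
      as [x [[_ H1] [_ H2]]].
    lra.
Qed.

Lemma lambda_ex (U : Open) (a : pt p U) : exists l, is_lambda U a l.
Proof.
  assert (Hpos : forall y, U y -> 0 <= y) by (intros; apply (proj1 (oopen U)); auto).
  destruct (pred_threshold (fun x => pt_filter U a (Lt U x))) as [l [Habove Hbelow]].
  - intros x y Hxy Hx. apply (pt_filter_mono U a (Lt U x)); auto.
    + intros z [Uz Hz]. split; auto; lra.
    + intros z [Uz _]; auto.
  - destruct (pt_filter_cover U a U nat (fun n => Lt U (INR n)) (pt_filter_self U a))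
      as [n Hn].
    + intros n x [Ux _]; auto.
    + intros x Ux. destruct (INR_archimed 1 x ltac:(lra)) as [n Hn].
      exists n. split; auto. lra.
    + exists (INR n); auto.
  - exists 0. intro H. destruct (pt_filter_nonempty _ _ _ H) as [y [Uy Hy]].
    pose proof (Hpos y Uy). lra.
  - assert (HB : forall e, 0 < e -> pt_filter U a (Ball U l e)).
    { intros e He.
      destruct (pt_filter_cover U a (Lt U (l + e)) bool
        (fun b => if b then Lt U (l - e/2) else Ball U l e) (Habove e He)) as [[|] Hb].
      - intros [|] x; simpl; intros [Ux Hx]; split; auto; [lra | split_Rabs; lra].
      - intros x [Ux Hx]. destruct (Rlt_dec x (l - e/2)).
        + exists true. split; auto.
        + exists false. split; auto. split_Rabs; lra.
      - exfalso. apply (Hbelow (l - e/2)); [lra | exact Hb].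
      - exact Hb. }
    exists l. split; auto. apply (pt_filter_limit_mem U a); auto.
Qed.

Lemma is_lambda_unique (U : Open) (a : pt p U) l1 l2 :
  is_lambda U a l1 -> is_lambda U a l2 -> l1 = l2.
Proof.
  intros [_ H1] [_ H2]. apply NNPP; intro Hne.
  assert (He : 0 < Rabs (l1 - l2) / 2) by (pose proof (Rabs_pos_lt (l1 - l2)); lra).
  destruct (pt_filter_nonempty _ _ _ (pt_filter_inter U a _ _ (H1 _ He) (H2 _ He)))
    as [x [[_ Hx1] [_ Hx2]]].
  revert Hx1 Hx2. split_Rabs; lra.
Qed.

Definition lambda (U : Open) (a : pt p U) : R :=
  proj1_sig (constructive_indefinite_description _ (lambda_ex U a)).

Lemma lambda_spec (U : Open) (a : pt p U) : is_lambda U a (lambda U a).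
Proof. unfold lambda. destruct (constructive_indefinite_description _ _); auto. Qed.

Lemma lambda_pmap (V U : Open) n (h : hom V U n) (a : pt p V) :
  lambda U (pmap p V U n h a) = INR n * lambda V a.
Proof.
  apply (is_lambda_unique U (pmap p V U n h a)); [apply lambda_spec|].
  destruct (lambda_spec V a) as [HV HF]. set (l := lambda V a) in *.
  pose proof h as [Hn HVU].
  assert (Hnp : 0 < INR n) by (apply lt_0_INR; lia).
  split; [apply HVU; auto|].
  intros e He. destruct (HF (e / INR n)) as [a' [h' E]]; [apply Rdiv_lt_0_compat; auto|].
  assert (g : hom (Ball V l (e / INR n)) (Ball U (INR n * l) e) n).
  { split; auto. intros x [Vx Hx]. split; [apply HVU; auto|].
    rewrite <- Rmult_minus_distr_l, Rabs_mult, Rabs_right by lra.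
    apply Rmult_lt_compat_l with (r := INR n) in Hx; auto.
    replace (INR n * (e / INR n)) with e in Hx by (field; lra). auto. }
  exists (pmap p _ _ n g a').
  exists (hom_incl _ _ (fun x (Hx : Ball U (INR n * l) e x) => proj1 Hx)).
  assert (h3 : hom (Ball V l (e / INR n)) U n).
  { split; auto. intros x [Vx _]. apply HVU; auto. }
  rewrite (pmap_comp_eq _ _ _ _ _ n _ _ h3) by lia. rewrite <- E.
  rewrite (pmap_comp_eq _ _ _ _ _ n _ _ h3) by lia. reflexivity.
Qed.

End Point.

Lemma lambda_transport (p q : point) (al : forall U, pt p U -> pt q U)
  (Hal : forall V U n (h : hom V U n) a, al U (pmap p V U n h a) = pmap q V U n h (al V a))
  (U : Open) (a : pt p U) : lambda q U (al U a) = lambda p U a.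
Proof.
  apply (is_lambda_unique q U (al U a)); [apply lambda_spec|].
  destruct (lambda_spec p U a) as [Ul HF]. split; auto.
  intros e He. destruct (HF e He) as [a' [h E]]. exists (al _ a'), h.
  rewrite <- Hal, E. auto.
Qed.

Section StalkHom.
Variables (p : point) (r : stalk_hom p).

Lemma rho_incl (W U : Open) (h : hom W U 1) (a' : pt p W) g :
  O_sec U g -> rho p r W g a' = rho p r U g (pmap p W U 1 h a').
Proof.
  intros Hg. rewrite <- (rho_res p r W U 1 h g a' Hg). f_equal.
  apply functional_extensionality; intro x. simpl. rewrite Rmult_1_l. auto.
Qed.

Lemma rho_const (U : Open) a c : rho p r U (fun _ => Some c) a = Some c.
Proof.
  pose proof (rho_lin p r (Some c) U (fun _ => Some 0) a (O_sec_const U 0)) as H.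
  rewrite (rho_one p r U a) in H. simpl in H. rewrite Rplus_0_r in H. exact H.
Qed.

Lemma rho_ball (U : Open) (a : pt p U) d : 0 < d ->
  exists a' : pt p (Ball U (lambda p U a) d),
    forall f, O_sec U f -> rho p r U f a = rho p r (Ball U (lambda p U a) d) f a'.
Proof.
  intros Hd. destruct (proj2 (lambda_spec p U a) d Hd) as [a' [h E]].
  exists a'. intros f Hf. rewrite (rho_incl _ U h a' f Hf), E. reflexivity.
Qed.

(* Near [lambda] the affine function stays above the constant [v - e], so [rho]
   sees it as the max of itself and that constant. *)
Lemma rho_aff_ge (U : Open) (a : pt p U) k c e : 0 < e ->
  rmax_le (Some (c + IZR k * lambda p U a - e)) (rho p r U (aff k (Some c)) a).
Proof.
  intros He. set (l := lambda p U a). set (v := c + IZR k * l).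
  set (d := e / (Rabs (IZR k) + 1)).
  pose proof (Rabs_pos (IZR k)).
  assert (Hd : 0 < d) by (apply Rdiv_lt_0_compat; lra).
  destruct (rho_ball U a d Hd) as [a' Ha']. fold l in Ha'.
  set (W := Ball U l d) in *.
  assert (Hmx : forall x, W x ->
    aff k (Some c) x = mx (aff k (Some c) x) ((fun _ => Some (v - e)) x)).
  { intros x [_ Hx]. unfold aff; simpl. f_equal. symmetry. apply Rmax_left.
    assert (Rabs (IZR k * x - IZR k * l) < e).
    { rewrite <- Rmult_minus_distr_l, Rabs_mult.
      apply Rle_lt_trans with (Rabs (IZR k) * d).
      - apply Rmult_le_compat_l; lra.
      - unfold d. apply Rmult_lt_reg_r with (Rabs (IZR k) + 1); [lra|].
        field_simplify; lra. }
    unfold v. split_Rabs; lra. }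
  pose proof (O_sec_aff W k (Some c)) as HW.
  apply mx_Some_le.
  rewrite Ha' by apply O_sec_aff.
  rewrite (rho_ext p r W _ _ a' HW (O_sec_ext W _ _ Hmx HW) Hmx) at 1.
  rewrite (rho_max p r W _ _ a' HW (O_sec_const W _)), rho_const. reflexivity.
Qed.

(* Squeeze: [aff k c] and its reflection through [lambda] are both bounded
   below by their common value at [lambda], and add up to a constant. *)
Lemma rho_aff (U : Open) (a : pt p U) k b :
  rho p r U (aff k b) a = aff k b (lambda p U a).
Proof.
  destruct b as [c|]; [|apply rho_zero].
  set (l := lambda p U a). set (v := c + IZR k * l).
  assert (Hrefl : v = (2 * v - c) + IZR (- k) * l) by (rewrite opp_IZR; unfold v; ring).
  pose proof (rho_aff_ge U a k c) as Hge. pose proof (rho_aff_ge U a (- k) (2 * v - c)) as Hge'.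
  fold l v in Hge. fold l in Hge'. rewrite <- Hrefl in Hge'.
  destruct (rho p r U (aff k (Some c)) a) as [w|] eqn:Ew; [|destruct (Hge 1); lra].
  destruct (rho p r U (aff (- k) (Some (2 * v - c))) a) as [w'|] eqn:Ew';
    [|destruct (Hge' 1); lra].
  assert (Hs : pl (Some w) (Some w') = Some (2 * v)).
  { rewrite <- Ew, <- Ew', <- (rho_plus p r U _ _ a (O_sec_aff U _ _) (O_sec_aff U _ _)).
    rewrite <- (rho_const U a (2 * v)). f_equal. apply functional_extensionality; intro x.
    unfold aff; simpl. rewrite opp_IZR. f_equal. ring. }
  simpl in Hs. injection Hs as Hs.
  assert (v <= w) by (apply Rle_plus_epsilon; intros e He; specialize (Hge e He); simpl in Hge; lra).
  assert (v <= w') by (apply Rle_plus_epsilon; intros e He; specialize (Hge' e He); simpl in Hge'; lra).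
  unfold aff; simpl. f_equal. fold l v. lra.
Qed.

Lemma rho_eval (U : Open) f a : O_sec U f -> rho p r U f a = f (lambda p U a).
Proof.
  intros Hf. destruct (lambda_spec p U a) as [Ul _].
  destruct (O_sec_germ U f (lambda p U a) Hf Ul) as [d [k1 [b1 [k2 [b2 [Hd Hy]]]]]].
  destruct (rho_ball U a d Hd) as [a' Ha'].
  set (W := Ball U (lambda p U a) d) in *.
  assert (HfW : O_sec W f) by (apply (O_sec_restrict W U); auto; intros x [Ux _]; auto).
  assert (Hmx : forall x, W x -> f x = mx (aff k1 b1 x) (aff k2 b2 x))
    by (intros x [Ux Hx]; auto).
  rewrite (Ha' f Hf), (rho_ext p r W _ _ a' HfW (O_sec_ext W _ _ Hmx HfW) Hmx).
  rewrite (rho_max p r W _ _ a' (O_sec_aff W _ _) (O_sec_aff W _ _)).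
  rewrite <- !Ha' by apply O_sec_aff. rewrite !rho_aff.
  symmetry. apply Hy; auto. rewrite Rminus_diag, Rabs_R0. auto.
Qed.

End StalkHom.

Definition eval_stalk_hom (p : point) : stalk_hom p.
Proof.
  refine (Build_stalk_hom p (fun U f a => f (lambda p U a)) _ _ _ _ _ _ _);
    try reflexivity.
  - intros U f g a _ _ E. apply E, (lambda_spec p U a).
  - intros V U n h f a _. rewrite lambda_pmap. reflexivity.
Defined.

Theorem theorem4p3 :
  (* surjective *)
  (forall p : point, exists (q : point) (s : stalk_hom q), pt_iso q p) /\
  (* injective *)
  (forall (p : point) (r : stalk_hom p) (q : point) (s : stalk_hom q),
      pt_iso p q -> site_pt_iso p r q s).
Proof.
  split.
  - intros p. exists p, (eval_stalk_hom p), (fun U a => a), (fun U a => a). auto.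
  - intros p r q s [al [be [Hbe [Hal Hnat]]]]. exists al, be.
    repeat split; auto. intros U f a Hf.
    rewrite (rho_eval q s U f _ Hf), (rho_eval p r U f a Hf), (lambda_transport p q al Hnat).
    reflexivity.
Qed.
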